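(* For all integers $k,r\geq 1$, $AW(k;r)$ exists (i.e., is finite) and satisfies $AW(k;r)\le k^{2r-1}$.
   Context: A sequence of positive integers $w_1<w_2<\dots<w_n$ is an ascending wave if $w_{i+1}-w_i \geq w_i-w_{i-1}$ for $2\le i\le n-1$. For positive integers $k,r$, $AW(k;r)$ denotes the least positive integer $N$ such that every $r$-coloring of $\{1,2,\dots,N\}$ contains a $k$-term monochromatic ascending wave. *)

From mathcomp Require Import all_boot.
Set Implicit Arguments. Unset Strict Implicit. Unset Printing Implicit Defensive.

Definition ascending_wave (w : seq nat) : Prop :=
  all (fun x => 0 < x) w /\ sorted ltn w /\
  forall i, i.+2 < size w ->
    nth 0 w i.+1 - nth 0 w i <= nth 0 w i.+2 - nth 0 w i.+1.

(* Every r-coloring of {1,...,N} contains a k-term monochromatic ascending wave.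
   A coloring is any c : nat -> 'I_r; only its values on {1,...,N} matter. *)
Definition AW_prop (k r N : nat) : Prop :=
  forall c : nat -> 'I_r,
    exists w : seq nat,
      [/\ size w = k, ascending_wave w,
          all (fun x => x <= N) w &
          exists col : 'I_r, all (fun x => c x == col) w].

Definition is_AW (k r N : nat) : Prop :=
  0 < N /\ AW_prop k r N /\ forall M, 0 < M -> M < N -> ~ AW_prop k r M.

From mathcomp Require Import all_boot zify.
From Stdlib Require Import Classical.
Set Implicit Arguments. Unset Strict Implicit.

(* Induction on the number n + 1 of colours that occur in an interval of length
   k^(2n+1).  Cut it into k blocks of length M = k^(2n-1), the i-th starting at
   i^2 M.  If every block contains a point of some fixed colour, one point per
   block gives a monochromatic ascending wave: consecutive gaps lie in
   (2iM, (2i+2)M) and so increase.  Otherwise some block of length M misses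
   that colour and uses only n colours, and induction applies to it. *)

Lemma exists_least (P : nat -> Prop) n :
  P n -> exists m, [/\ m <= n, P m & forall j, j < m -> ~ P j].
Proof.
elim/ltn_ind: n => n IH Pn.
have [[j ltjn Pj] | noj] := classic (exists2 j, j < n & P j).
- have [m [lemj Pm minm]] := IH j ltjn Pj.
  by exists m; split => //; apply: leq_trans lemj (ltnW ltjn).
- by exists n; split => // j ltjn Pj; apply: noj; exists j.
Qed.

Section MonochromaticWaves.

Variables (r k : nat) (c : nat -> 'I_r).

Definition mono_wave_in a b := exists w, [/\ size w = k, ascending_wave w,
  all (fun x => a < x <= b) w & exists col : 'I_r, all (fun x => c x == col) w].

Lemma mono_wave_in_widen a b a' b' :
  a' <= a -> b <= b' -> mono_wave_in a b -> mono_wave_in a' b'.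
Proof.
move=> le_a le_b [w [sz wave inw mono]]; exists w; split => //.
by apply/allP => x /(allP inw); lia.
Qed.

Lemma mono_wave_in_mkseq (f : nat -> nat) a b (col : 'I_r) :
  (forall i, i < k -> a < f i <= b /\ c (f i) = col) ->
  (forall i, i.+1 < k -> f i < f i.+1) ->
  (forall i, i.+2 < k -> f i.+1 - f i <= f i.+2 - f i.+1) ->
  mono_wave_in a b.
Proof.
move=> f_in f_incr f_convex; exists (mkseq f k).
have in_mkseq x : x \in mkseq f k -> exists2 i, i < k & x = f i.
  by case/mapP => i; rewrite mem_iota => /andP [_ ltik]; exists i.
split; first by rewrite size_mkseq.
- split; [|split].
  + by apply/allP => _ /in_mkseq [i /f_in ? ->]; lia.
  + apply/(sortedP 0) => i; rewrite size_mkseq => ltik.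
    by rewrite !nth_mkseq //; [apply: f_incr | lia].
  + move=> i; rewrite size_mkseq => ltik.
    by rewrite !nth_mkseq //; [apply: f_convex | lia | lia].
- by apply/allP => _ /in_mkseq [i /f_in ? ->]; lia.
- by exists col; apply/allP => _ /in_mkseq [i /f_in [_ f_col] ->]; rewrite f_col.
Qed.

Lemma mono_wave_in_consecutive a (col : 'I_r) :
  (forall x, a < x <= a + k -> c x = col) -> mono_wave_in a (a + k).
Proof.
move=> mono; apply: (@mono_wave_in_mkseq (fun i => a + i.+1) _ _ col) => i ltik.
- by split; [lia | apply: mono; lia].
- by lia.
- by lia.
Qed.

Definition block a M i := iota (a + i * i * M).+1 M.

Lemma block_le a M i : i < k -> a + i * i * M + M <= a + k * k * M.
Proof. by move=> ltik; rewrite -addnA leq_add2l -mulSnr leq_mul2r; nia. Qed.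

Lemma mono_wave_in_blocks a M (col : 'I_r) :
  (forall i, i < k -> has (fun x => c x == col) (block a M i)) ->
  mono_wave_in a (a + k * k * M).
Proof.
move=> has_col; pose f i := nth 0 (block a M i) (find (fun x => c x == col) (block a M i)).
have f_block i : i < k -> a + i * i * M < f i <= a + i * i * M + M /\ c (f i) = col.
  move=> ltik; have f_col : c (f i) = col
    by apply/eqP; apply: (nth_find 0 (has_col i ltik)).
  have := has_col i ltik; rewrite has_find => /(mem_nth 0).
  by rewrite mem_iota -/(f i) f_col => ?; split => //; lia.
apply: (@mono_wave_in_mkseq f _ _ col) => i lt_ik.
- by have [? ->] := f_block i lt_ik; split => //; have := block_le a M lt_ik; lia.
- by have := f_block i (ltnW lt_ik); have := f_block i.+1 lt_ik; nia.
- have := f_block i (ltnW (ltnW lt_ik)); have := f_block i.+1 (ltnW lt_ik).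
  by have := f_block i.+2 lt_ik; nia.
Qed.

Lemma mono_wave_in_colors n (S : {set 'I_r}) a :
  #|S| = n.+1 -> (forall x, a < x <= a + k ^ (2 * n + 1) -> c x \in S) ->
  mono_wave_in a (a + k ^ (2 * n + 1)).
Proof.
elim: n S a => [|n IH] S a cardS colS.
  have /cards1P [s S1] : #|S| == 1 by rewrite cardS.
  rewrite muln0 expn1 in colS *; apply: (mono_wave_in_consecutive (col := s)).
  by move=> x /colS; rewrite S1 in_set1 => /eqP.
set M := k ^ (2 * n + 1).
have kM : k ^ (2 * n.+1 + 1) = k * k * M.
  by rewrite /M -mulnA -!expnS; congr (_ ^ _); lia.
rewrite kM in colS *.
have /card_gt0P [s Ss] : 0 < #|S| by rewrite cardS.
have [all_s | /forallPn [[i ltik] /= no_s]] :=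
  boolP [forall i : 'I_k, has (fun x => c x == s) (block a M i)].
  by apply: (mono_wave_in_blocks (col := s)) => i ltik; apply: (forallP all_s (Ordinal ltik)).
have cardS' : #|S :\ s| = n.+1 by move: cardS; rewrite (cardsD1 s) Ss; lia.
apply: (@mono_wave_in_widen (a + i * i * M)) (block_le a M ltik) _; first lia.
apply: IH cardS' _ => x x_block; rewrite !inE; apply/andP; split.
- apply: contra no_s => /eqP c_x; apply/hasP; exists x; last by rewrite c_x.
  by rewrite mem_iota; lia.
- by apply: colS; have := block_le a M ltik; lia.
Qed.

End MonochromaticWaves.

Lemma AW_prop_pow k r : 0 < r -> AW_prop k r (k ^ (2 * r - 1)).
Proof.
case: r => [//|n] _ c.
have cardT : #|[set: 'I_n.+1]| = n.+1 by rewrite cardsT card_ord.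
have [w [sz wave inw mono]] :=
  @mono_wave_in_colors _ k c n _ 0 cardT (fun x _ => in_setT (c x)).
exists w; split => //; apply/allP => x /(allP inw) /andP [_].
by have -> : 2 * n.+1 - 1 = 2 * n + 1 by lia.
Qed.

Lemma AW_prop0 k r : 0 < k -> 0 < r -> ~ AW_prop k r 0.
Proof.
move=> k_gt0 r_gt0 /(_ (fun _ => Ordinal r_gt0)) [w [sz [pos _] le0 _]].
have w0 : nth 0 w 0 \in w by rewrite mem_nth ?sz.
by have := allP pos _ w0; have := allP le0 _ w0; lia.
Qed.

Theorem mainTheorem2 (k r : nat) (hk : 1 <= k) (hr : 1 <= r) :
  exists N : nat, is_AW k r N /\ N <= k ^ (2 * r - 1).
Proof.
have [N [le_N AW_N minN]] := exists_least (AW_prop_pow k hr).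
have N_gt0 : 0 < N by case: N AW_N {le_N minN} => // /(AW_prop0 hk hr).
by exists N; split => //; split; last split => // M _ /minN.
Qed.
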